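(* Let $q$ be an odd prime power, $d \ge 1$ and $n \ge 2$ integers, and $M_n(\mathbb{F}_q)$ the set of $n\times n$ matrices over $\mathbb{F}_q$. Define the sum-product digraph $G$ with vertex set $V = M_n(\mathbb{F}_q)^{d+1}$, where there is a directed edge from $(A_1,\dots,A_d,E)$ to $(B_1,\dots,B_d,F)$ if and only if $A_1B_1 + A_2B_2 + \dots + A_dB_d = E + F$. Then $G$ is a $\left(q^{(d+1)n^2},\, q^{dn^2},\, C q^{dn^2 - (d-1)n/2 - 1/2}\right)$-digraph for some positive constant $C$ (depending only on $d$ and $n$).
   Context: A digraph $G$ is an $(N,D,\lambda)$-digraph if it has $N$ vertices, every vertex has in-degree and out-degree both equal to $D$, and $\lambda(G) \le \lambda$, where $\lambda(G) = \max\{|\lambda_i| : |\lambda_i| \ne D\}$ is the maximum modulus over the (possibly complex) eigenvalues $\lambda_i$ of the adjacency matrix $A_G$ of $G$ ($(A_G)_{uv}=1$ if there is a directed edge from $u$ to $v$, and $0$ otherwise) whose modulus is not equal to $D$. *)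

From HB Require Import structures.
From mathcomp Require Import all_boot all_order all_algebra all_field.
Set Implicit Arguments. Unset Strict Implicit. Unset Printing Implicit Defensive.
Import Order.TTheory GRing.Theory Num.Theory.
Local Open Scope ring_scope.

(* A digraph is given by a finite vertex type T and an edge relation e : rel T
   (e u v means there is a directed edge u -> v). *)

Definition adj_mx (T : finType) (e : rel T) : 'M[algC]_#|T| :=
  \matrix_(i, j) ((e (enum_val i) (enum_val j))%:R : algC).

Definition NDL_digraph (T : finType) (e : rel T) (N D : nat) (lam : algC) : Prop :=
  [/\ #|T| = N,
      (forall u : T, #|[set v | e u v]| = D),
      (forall v : T, #|[set u | e u v]| = D) &
      (forall z : algC, root (char_poly (adj_mx e)) z ->
         `|z| != D%:R -> `|z| <= lam)].

Definition sp_vertex (F : finFieldType) (d n : nat) : finType :=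
  ({ffun 'I_d -> 'M[F]_n} * 'M[F]_n)%type.

Definition sp_edge (F : finFieldType) (d n : nat) : rel (sp_vertex F d n) :=
  fun x y => \sum_(i < d) (x.1 i *m y.1 i) == x.2 + y.2.

From HB Require Import structures.
From mathcomp Require Import all_boot all_order all_algebra all_field.
From mathcomp Require Import ring zify.
Set Implicit Arguments. Unset Strict Implicit. Unset Printing Implicit Defensive.
Import Order.TTheory GRing.Theory Num.Theory.
Local Open Scope ring_scope.

(* A left eigenvector f of the adjacency matrix for an eigenvalue z satisfies
   z f(B, F) = sum_A f(A, A.B - F), where A.B = sum_i A_i B_i.  Expanding
   sum |z f|^2 gives a double sum over pairs (A, A') of correlations.  When
   B |-> (A - A').B is onto, the correlation factors through the row sums of f,
   and these terms cancel in total because |z| <> q^(dn^2) forces sum f = 0.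
   Each remaining pair costs at most q^(dn^2) times the energy of f, and a
   non-surjective D = A - A' has a nonzero common left kernel vector, so there
   are at most n q^(n-1) q^((n-1)nd) such D.  Hence
   |z|^2 <= 2n q^(2dn^2 - (d-1)n - 1). *)

Lemma normrM_le_mean_sqr (a b : algC) : `|a| * `|b| *+ 2 <= `|a| ^+ 2 + `|b| ^+ 2.
Proof. exact: (real_leif_mean_square_scaled (normr_real a) (normr_real b)).1. Qed.

Lemma sqr_norm_sum_le (I : finType) (a : I -> algC) :
  `|\sum_i a i| ^+ 2 <= #|I|%:R * \sum_i `|a i| ^+ 2.
Proof.
apply: le_trans (_ : (\sum_i `|a i|) ^+ 2 <= _).
  by rewrite lerXn2r ?nnegrE ?ler_norm_sum ?sumr_ge0.
rewrite -(ler_pMn2r (isT : (0 < 2)%N)) expr2 mulr_suml -sumrMnl.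
apply: le_trans (_ : \sum_i \sum_j (`|a i| ^+ 2 + `|a j| ^+ 2) <= _).
  apply: ler_sum => i _; rewrite mulr_sumr -sumrMnl.
  by apply: ler_sum => j _; apply: normrM_le_mean_sqr.
under eq_bigr do rewrite big_split /= sumr_const.
by rewrite big_split /= sumr_const sumrMnl -mulr2n mulr_natl.
Qed.

Lemma adj_mx_eigenvector (T : finType) (e : rel T) (z : algC) :
  root (char_poly (adj_mx e)) z ->
  exists2 f : T -> algC,
    forall y, \sum_x f x * (e x y)%:R = z * f y & exists x, f x != 0.
Proof.
rewrite -eigenvalue_root_char => /eigenvalueP [v vA /rV0Pn [i vi]].
exists (fun x => v 0 (enum_rank x)); last by exists (enum_val i); rewrite enum_valK.
move=> y; have := congr1 (fun u : 'rV_#|T| => u 0 (enum_rank y)) vA.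
rewrite !mxE => <-; rewrite (reindex enum_rank) /=.
  by apply: eq_bigr => x _; rewrite mxE !enum_rankK.
exact: onW_bij (@enum_rank_bij _).
Qed.

Lemma sum_comp_onto_additive (V W : finZmodType) (g : V -> W) (h : W -> algC) :
  {morph g : x y / x + y} -> (forall w, exists b, g b = w) ->
  \sum_b h (g b) = #|V|%:R / #|W|%:R * \sum_w h w.
Proof.
move=> gD g_onto; set c := #|[pred b | g b == 0]|.
have fiberE w : #|[pred b | g b == w]| = c.
  have [b0 <-] := g_onto w; rewrite /c -!sum1_card (reindex_inj (addIr b0)) /=.
  by apply: eq_bigl => b; rewrite !inE gD -{2}(add0r (g b0)) (inj_eq (addIr _)).
have cardV : #|V| = (#|W| * c)%N.
  rewrite -sum1_card (partition_big g predT) //= -sum_nat_const.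
  by apply: eq_bigr => w' _; rewrite sum1_card fiberE.
rewrite (partition_big g predT) //= cardV natrM [_ * c%:R]mulrC mulfK; last first.
  by rewrite pnatr_eq0 -lt0n; apply/card_gt0P; exists 0.
rewrite mulr_natl -sumrMnl; apply: eq_bigr => w _.
by rewrite (eq_bigr (fun=> h w)) => [|b /eqP ->]; rewrite ?sumr_const ?fiberE.
Qed.

Section BilinearDigraph.
Variables (V W : finZmodType) (beta : V -> V -> W).
Hypothesis betaBl : forall a a' b, beta (a - a') b = beta a b - beta a' b.
Hypothesis betaDr : forall a b b', beta a (b + b') = beta a b + beta a b'.

Definition onto_at (c : V) : bool := [forall w, exists b, beta c b == w].
Definition degenerate : {set V} := [set c | ~~ onto_at c].

Local Notation kappa := (#|V|%:R / #|W|%:R : algC).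

Lemma sum_degenerate_pairs (E : V -> algC) :
  \sum_a \sum_a' (a - a' \in degenerate)%:R * (E a + E a') =
  #|degenerate|%:R *+ 2 * \sum_a E a.
Proof.
have count_l a : \sum_a' ((a - a' \in degenerate)%:R : algC) = #|degenerate|%:R.
  rewrite -sumr_const [RHS]big_mkcond (reindex_inj (subrI a)) /=.
  by apply: eq_bigr => c _; rewrite subKr; case: (c \in _).
have count_r a' : \sum_a ((a - a' \in degenerate)%:R : algC) = #|degenerate|%:R.
  rewrite -sumr_const [RHS]big_mkcond (reindex_inj (addIr a')) /=.
  by apply: eq_bigr => c _; rewrite addrK; case: (c \in _).
transitivity (\sum_a \sum_a' (a - a' \in degenerate)%:R * E a +
              \sum_a' \sum_a (a - a' \in degenerate)%:R * E a').
  rewrite [X in _ = _ + X]exchange_big -big_split; apply: eq_bigr => a _.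
  by rewrite -big_split; apply: eq_bigr => a' _; rewrite mulrDr.
under eq_bigr do rewrite -mulr_suml count_l.
under [X in _ + X]eq_bigr do rewrite -mulr_suml count_r.
by rewrite -mulr_sumr -mulr2n [RHS]mulrnAl.
Qed.

Section Energy.
Variable f : V * W -> algC.

Definition mass a := \sum_w f (a, w).
Definition energy a := \sum_w `|f (a, w)| ^+ 2.
Definition in_sum b w := \sum_a f (a, beta a b - w).
Definition corr a a' :=
  \sum_b \sum_w f (a, beta a b - w) * (f (a', beta a' b - w))^*.

Lemma sum_sqr_in_sum :
  \sum_b \sum_w `|in_sum b w| ^+ 2 = \sum_a \sum_a' corr a a'.
Proof.
transitivity (\sum_b \sum_w \sum_a \sum_a'
    f (a, beta a b - w) * (f (a', beta a' b - w))^*).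
  apply: eq_bigr => b _; apply: eq_bigr => w _.
  rewrite normCK rmorph_sum mulr_suml; apply: eq_bigr => a _.
  by rewrite mulr_sumr.
under eq_bigr do rewrite exchange_big.
rewrite exchange_big; apply: eq_bigr => a _.
under eq_bigr do rewrite exchange_big.
by rewrite exchange_big.
Qed.

Lemma corr_onto a a' :
  onto_at (a - a') -> corr a a' = kappa * mass a * (mass a')^*.
Proof.
move=> /forallP onto.
have g_onto w : exists b, beta (a - a') b = w.
  by have /existsP [b /eqP] := onto w; exists b.
have shift u : \sum_b (f (a', u - beta (a - a') b))^* = kappa * (mass a')^*.
  rewrite (sum_comp_onto_additive (fun v => (f (a', u - v))^*) (betaDr _) g_onto).
  by rewrite /mass rmorph_sum (reindex_inj (subrI u)) /=; under eq_bigr do rewrite subKr.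
transitivity (\sum_u f (a, u) * \sum_b (f (a', u - beta (a - a') b))^*).
  rewrite /corr (eq_bigr (fun b => \sum_u f (a, u) * (f (a', u - beta (a - a') b))^*)).
    by rewrite exchange_big; apply: eq_bigr => u _; rewrite mulr_sumr.
  move=> b _; rewrite (reindex_inj (subrI (beta a b))) /=; apply: eq_bigr => u _.
  by rewrite subKr betaBl !opprB addrCA.
under eq_bigr do rewrite shift.
by rewrite -mulr_suml mulrCA mulrA.
Qed.

Lemma energy_shift a c : \sum_w `|f (a, c - w)| ^+ 2 = energy a.
Proof. by rewrite (reindex_inj (subrI c)) /=; under eq_bigr do rewrite subKr. Qed.

Lemma norm_corr_le a a' :
  `|corr a a'| *+ 2 <= #|V|%:R * (energy a + energy a').
Proof.
apply: le_trans (_ : (\sum_b \sum_w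
    `|f (a, beta a b - w)| * `|f (a', beta a' b - w)|) *+ 2 <= _).
  rewrite lerMn2r /=; apply: le_trans (ler_norm_sum _ _ _) _; apply: ler_sum => b _.
  apply: le_trans (ler_norm_sum _ _ _) _; apply: ler_sum => w _.
  by rewrite normrM norm_conjC.
rewrite -sumrMnl; apply: le_trans (_ : \sum_b \sum_w
    (`|f (a, beta a b - w)| ^+ 2 + `|f (a', beta a' b - w)| ^+ 2) <= _).
  apply: ler_sum => b _; rewrite -sumrMnl.
  by apply: ler_sum => w _; apply: normrM_le_mean_sqr.
under eq_bigr do rewrite big_split /= !energy_shift.
by rewrite sumr_const mulr_natl.
Qed.

Lemma norm_kappa_mass_le a a' :
  `|kappa * mass a * (mass a')^*| *+ 2 <= #|V|%:R * (energy a + energy a').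
Proof.
have kappa_ge0 : 0 <= kappa by rewrite divr_ge0.
have cardW_neq0 : #|W|%:R != 0 :> algC.
  by rewrite pnatr_eq0 -lt0n; apply/card_gt0P; exists 0.
rewrite -mulrA normrM (ger0_norm kappa_ge0) normrM norm_conjC -mulrnAr.
apply: le_trans (_ : kappa * (`|mass a| ^+ 2 + `|mass a'| ^+ 2) <= _).
  by rewrite ler_wpM2l ?normrM_le_mean_sqr.
rewrite -[in leRHS](divfK cardW_neq0 #|V|%:R) -[leRHS]mulrA ler_wpM2l // mulrDr.
by apply: lerD; apply: sqr_norm_sum_le.
Qed.

Lemma sum_sqr_in_sum_le : \sum_a mass a = 0 ->
  \sum_b \sum_w `|in_sum b w| ^+ 2 <=
  #|V|%:R * #|degenerate|%:R *+ 2 * \sum_a energy a.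
Proof.
move=> mass0.
(* err vanishes on nondegenerate pairs, and the rank-one part sums to zero. *)
pose err a a' := corr a a' - kappa * mass a * (mass a')^*.
have err_le a a' :
    `|err a a'| <= #|V|%:R * ((a - a' \in degenerate)%:R * (energy a + energy a')).
  rewrite mulrCA inE; case: (boolP (onto_at _)) => [/corr_onto eq_corr | _].
    by rewrite /err eq_corr subrr normr0 mul0r.
  rewrite mul1r -(ler_pMn2r (isT : (0 < 2)%N)).
  apply: le_trans (_ : (`|corr a a'| + `|kappa * mass a * (mass a')^*|) *+ 2 <= _).
    by rewrite lerMn2r ler_normB orbT.
  by rewrite mulrnDl [leRHS]mulr2n lerD ?norm_corr_le ?norm_kappa_mass_le.
have sum_main : \sum_a \sum_a' kappa * mass a * (mass a')^* = 0.
  rewrite (eq_bigr (fun a => kappa * mass a * (\sum_a' mass a')^*)).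
    by rewrite -mulr_suml -mulr_sumr mass0 mulr0 mul0r.
  by move=> a _; rewrite rmorph_sum [RHS]mulr_sumr.
have sum_corr : \sum_a \sum_a' corr a a' = \sum_a \sum_a' err a a'.
  transitivity (\sum_a \sum_a' (kappa * mass a * (mass a')^* + err a a')).
    by apply: eq_bigr => a _; apply: eq_bigr => a' _; rewrite addrC subrK.
  by under eq_bigr do rewrite big_split /=; rewrite big_split /= sum_main add0r.
have in_sum_ge0 : 0 <= \sum_b \sum_w `|in_sum b w| ^+ 2.
  by apply: sumr_ge0 => b _; apply: sumr_ge0 => w _; apply: exprn_ge0.
rewrite -(ger0_norm in_sum_ge0) sum_sqr_in_sum sum_corr.
rewrite -(mulrnAr #|V|%:R) -[leRHS]mulrA -sum_degenerate_pairs mulr_sumr.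
apply: le_trans (ler_norm_sum _ _ _) _.
apply: ler_sum => a _; rewrite mulr_sumr; apply: le_trans (ler_norm_sum _ _ _) _.
by apply: ler_sum => a' _; apply: err_le.
Qed.
End Energy.

Lemma eigenvalue_sqr_norm_le (f : V * W -> algC) (z : algC) :
  (forall b w, in_sum f b w = z * f (b, w)) -> (exists x, f x != 0) ->
  z != #|V|%:R -> `|z| ^+ 2 <= #|V|%:R * #|degenerate|%:R *+ 2.
Proof.
move=> eig [[a0 w0] f_neq0] zV.
have mass0 : \sum_a mass f a = 0.
  have sum_in_sum : \sum_b \sum_w in_sum f b w = #|V|%:R * \sum_a mass f a.
    transitivity (\sum_(b : V) \sum_a mass f a); last by rewrite sumr_const mulr_natl.
    apply: eq_bigr => b _; rewrite exchange_big; apply: eq_bigr => a _.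
    by rewrite /mass (reindex_inj (subrI (beta a b))) /=; under eq_bigr do rewrite subKr.
  have : (z - #|V|%:R) * \sum_a mass f a = 0.
    rewrite mulrBl -sum_in_sum mulr_sumr; apply/eqP; rewrite subr_eq0 eq_sym.
    by apply/eqP/eq_bigr => b _; rewrite mulr_sumr; apply: eq_bigr => w _; apply: eig.
  by move/eqP; rewrite mulf_eq0 subr_eq0 (negbTE zV) => /eqP.
have energy_gt0 : 0 < \sum_a energy f a.
  apply: lt_le_trans (_ : `|f (a0, w0)| ^+ 2 <= _); first by rewrite exprn_gt0 ?normr_gt0.
  have energy_ge0 a : 0 <= energy f a by apply: sumr_ge0 => w _; apply: exprn_ge0.
  rewrite (bigD1 a0) //= [energy f a0](bigD1 w0) //= -addrA lerDl.
  by rewrite addr_ge0 ?sumr_ge0 // => w _; apply: exprn_ge0.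
have := sum_sqr_in_sum_le mass0.
have -> : \sum_b \sum_w `|in_sum f b w| ^+ 2 = `|z| ^+ 2 * \sum_a energy f a.
  rewrite mulr_sumr; apply: eq_bigr => b _; rewrite mulr_sumr.
  by apply: eq_bigr => w _; rewrite eig normrM exprMn.
by rewrite ler_pM2r.
Qed.

Variable e : rel (V * W).
Hypothesis eE : forall x y, e x y = (beta x.1 y.1 == x.2 + y.2).

Lemma card_out_neighbours x : #|[set y | e x y]| = #|V|.
Proof.
have -> : [set y | e x y] = [set (b, beta x.1 b - x.2) | b : V].
  apply/setP => -[b w]; rewrite inE eE /=; apply/eqP/imsetP => [eq_b | [b' _ [-> ->]]].
    by exists b; rewrite // eq_b addrC addKr.
  by rewrite addrC subrK.
by rewrite card_imset // => b b' [].
Qed.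

Lemma card_in_neighbours y : #|[set x | e x y]| = #|V|.
Proof.
have -> : [set x | e x y] = [set (a, beta a y.1 - y.2) | a : V].
  apply/setP => -[a u]; rewrite inE eE /=; apply/eqP/imsetP => [eq_a | [a' _ [-> ->]]].
    by exists a; rewrite // eq_a addrK.
  by rewrite subrK.
by rewrite card_imset // => a a' [].
Qed.

Theorem bilinear_digraph_NDL (lam : algC) : 0 <= lam ->
  #|V|%:R * #|degenerate|%:R *+ 2 <= lam ^+ 2 ->
  NDL_digraph e (#|V| * #|W|) #|V| lam.
Proof.
move=> lam_ge0 lam_bound; split.
- exact: card_prod.
- exact: card_out_neighbours.
- exact: card_in_neighbours.
move=> z /adj_mx_eigenvector [f eig f_neq0] zV.
have in_sum_eig b w : in_sum f b w = z * f (b, w).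
  rewrite -eig; transitivity (\sum_a \sum_u f (a, u) * (e (a, u) (b, w))%:R).
    apply: eq_bigr => a _; rewrite [RHS](bigD1 (beta a b - w)) //= eE subrK eqxx mulr1.
    rewrite big1 ?addr0 // => u u_neq; rewrite eE /= -subr_eq eq_sym.
    by rewrite (negbTE u_neq) mulr0.
  by rewrite pair_big; apply: eq_bigr => -[].
have zV' : z != #|V|%:R by apply: contraNneq zV => ->; rewrite normr_nat.
rewrite -(ler_pXn2r (isT : (0 < 2)%N)) ?nnegrE //; apply: le_trans lam_bound.
exact: eigenvalue_sqr_norm_le in_sum_eig f_neq0 zV'.
Qed.
End BilinearDigraph.

(* The library does not equip finite functions into a finite Z-module with
   the joint finZmodType structure. *)
HB.instance Definition _ (I : finType) (M : finZmodType) :=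
  GRing.Zmodule.on {ffun I -> M}.

Section SumProductDigraph.
Variables (F : finFieldType) (d n : nat).

Definition mxdot (A B : {ffun 'I_d -> 'M[F]_n}) : 'M[F]_n := \sum_i A i *m B i.

Lemma mxdotBl A A' B : mxdot (A - A') B = mxdot A B - mxdot A' B.
Proof. by rewrite /mxdot -sumrB; apply: eq_bigr => i _; rewrite !ffunE mulmxBl. Qed.

Lemma mxdotDr A B B' : mxdot A (B + B') = mxdot A B + mxdot A B'.
Proof. by rewrite /mxdot -big_split; apply: eq_bigr => i _; rewrite ffunE mulmxDr. Qed.

Lemma not_onto_mxdot_left_kernel D : ~~ onto_at mxdot D ->
  exists2 u : 'rV[F]_n, u != 0 & forall j, u *m D j = 0.
Proof.
pose R := \mxrow_j (D j : 'M[F]_(n, (fun=> n) j)).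
have [R_free | R_not_free] := boolP (row_free R).
  case/negP; apply/forallP => G; apply/existsP.
  exists [ffun j => submxcol (pinvmx R *m G) j]; apply/eqP.
  transitivity (R *m \mxcol_j submxcol (pinvmx R *m G) j).
    by rewrite mul_mxrow_mxcol; apply: eq_bigr => j _; rewrite ffunE.
  by rewrite submxcolK mulmxA mulmxVp // mul1mx.
have /rowV0Pn [u /sub_kermxP uR u_neq0] : kermx R != 0 by rewrite kermx_eq0.
exists u => // j; move: uR; rewrite mul_mxrow => /(congr1 (fun M => submxrow M j)).
by rewrite mxrowK submxrow0.
Qed.

Lemma row_kernel_eq m (k : 'I_n) (u : 'rV[F]_n) (X Y : 'M[F]_(n, m)) :
  u 0 k = 1 -> u *m X = 0 -> u *m Y = 0 -> row' k X = row' k Y -> X = Y.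
Proof.
move=> uk uX uY XY.
have eq_off i c : i != k -> X i c = Y i c.
  rewrite eq_sym => /unlift_some [i' -> _].
  by have := congr1 (fun M : 'M_(n.-1, m) => M i' c) XY; rewrite !mxE.
apply/matrixP => i c; have [-> | /eq_off //] := eqVneq i k.
have : (u *m X) 0 c = (u *m Y) 0 c by rewrite uX uY.
rewrite !mxE (bigD1 k) //= [in RHS](bigD1 k) //= uk !mul1r.
by rewrite (eq_bigr (fun l => u 0 l * Y l c)) => [/addIr | l /eq_off ->].
Qed.

Lemma col'_eq (k : 'I_n) (u v : 'rV[F]_n) :
  u 0 k = v 0 k -> col' k u = col' k v -> u = v.
Proof.
move=> uvk uv; apply/rowP => c; have [-> // | ] := eqVneq c k.
rewrite eq_sym => /unlift_some [c' -> _].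
by have := congr1 (fun w : 'rV_(n.-1) => w 0 c') uv; rewrite !mxE.
Qed.

Definition kernel_pair (D : {ffun 'I_d -> 'M[F]_n}) (p : 'I_n * 'rV[F]_n) :=
  (p.2 0 p.1 == 1) && [forall j, p.2 *m D j == 0].

Lemma degenerate_kernel_pair D : D \in degenerate mxdot -> exists p, kernel_pair D p.
Proof.
rewrite inE => /not_onto_mxdot_left_kernel [u /rV0Pn [k uk] uD].
exists (k, (u 0 k)^-1 *: u); apply/andP; split; first by rewrite mxE mulVf.
by apply/forallP => j; rewrite -scalemxAl uD scaler0.
Qed.

(* A degenerate D is determined by a normalized left kernel vector u (u_k = 1)
   and the rows of the D j other than k; k0 is a junk value for other D. *)
Definition kernel_code (k0 : 'I_n) (D : {ffun 'I_d -> 'M[F]_n}) :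
    'I_n * 'rV[F]_n.-1 * {ffun 'I_d -> 'M[F]_(n.-1, n)} :=
  if [pick p | kernel_pair D p] is Some (k, u)
  then (k, col' k u, [ffun j => row' k (D j)]) else (k0, 0, 0).

Lemma kernel_code_inj k0 : {in degenerate mxdot &, injective (kernel_code k0)}.
Proof.
move=> D1 D2 /degenerate_kernel_pair [p1 D1p1] /degenerate_kernel_pair [p2 D2p2].
rewrite /kernel_code; case: pickP => [[k u1] /andP [/eqP u1k /forallP u1D] | /(_ p1)];
  last by rewrite D1p1.
case: pickP => [[k' u2] /andP [/eqP u2k /forallP u2D] | /(_ p2)]; last by rewrite D2p2.
case=> eq_k; subst k' => /col'_eq u12 /ffunP rows12.
have {u12} u12 : u1 = u2 by apply: u12; rewrite u1k u2k.
subst u2; apply/ffunP => j; apply: (row_kernel_eq u1k); [exact/eqP/u1D | exact/eqP/u2D |].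
by have := rows12 j; rewrite !ffunE.
Qed.

Lemma card_degenerate_mxdot : (0 < n)%N ->
  (#|degenerate mxdot| <= n * #|F| ^ (n.-1 + n.-1 * n * d))%N.
Proof.
move=> n_gt0; rewrite -(card_in_imset (@kernel_code_inj (Ordinal n_gt0))).
apply: leq_trans (max_card _) _.
rewrite !card_prod card_ord !card_mx card_ffun card_ord (card_mx F).
by rewrite -expnM mul1n -mulnA -expnD.
Qed.

End SumProductDigraph.

Lemma card_mxtuple (F : finType) d n :
  #|{ffun 'I_d -> 'M[F]_n}| = (#|F| ^ (d * n ^ 2))%N.
Proof. by rewrite card_ffun card_mx card_ord -expnM mulnn mulnC. Qed.

Lemma sum_product_exponentE d n : (0 < d)%N -> (0 < n)%N ->
  (d * n ^ 2 + (n.-1 + n.-1 * n * d) = 2 * d * n ^ 2 - (d - 1) * n - 1)%N.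
Proof. by case: d => // d _; case: n => // n _ /=; nia. Qed.

Lemma card_mxtuple_degenerate_le (F : finFieldType) d n : (0 < d)%N -> (0 < n)%N ->
  (#|{ffun 'I_d -> 'M[F]_n}| * #|degenerate (@mxdot F d n)| * 2 <=
   (2 * n) ^ 2 * #|F| ^ (2 * d * n ^ 2 - (d - 1) * n - 1))%N.
Proof.
move=> d_gt0 n_gt0; rewrite -(sum_product_exponentE d_gt0 n_gt0) card_mxtuple.
have deg_le := card_degenerate_mxdot F d n_gt0.
apply: leq_trans (leq_mul (leq_mul (leqnn _) deg_le) (leqnn 2)) _.
rewrite (expnD #|F| (d * n ^ 2)); set x := (#|F| ^ (d * n ^ 2))%N.
set y := (#|F| ^ (_ + _))%N.
have -> : (x * (n * y) * 2 = 2 * n * (x * y))%N by ring.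
by rewrite leq_mul2r -mulnn leq_pmull ?muln_gt0 ?n_gt0 ?orbT.
Qed.

Theorem proposition3p1 (d n : nat) (hd : (1 <= d)%N) (hn : (2 <= n)%N) :
  exists C : algC, C \is Num.real /\ 0 < C /\
    forall (q : nat) (F : finFieldType),
      (exists p k, prime p /\ (0 < k)%N /\ q = (p ^ k)%N) -> odd q ->
      #|F| = q ->
      NDL_digraph (@sp_edge F d n)
        (q ^ ((d.+1) * n ^ 2)) (q ^ (d * n ^ 2))
        (C * sqrtC (q%:R) ^+ (2 * d * n ^ 2 - (d - 1) * n - 1)).
Proof.
have n_gt0 : (0 < n)%N by apply: leq_trans hn.
exists (2 * n)%:R; split; first exact: realn.
split; first by rewrite ltr0n muln_gt0.
(* The bound holds over every finite field. *)
move=> q F _ _ <-.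
have cardVW : (#|{ffun 'I_d -> 'M[F]_n}| * #|{: 'M[F]_n}| = #|F| ^ (d.+1 * n ^ 2))%N.
  by rewrite card_mxtuple card_mx -expnD mulnn mulSn addnC.
rewrite -cardVW -card_mxtuple.
apply: (bilinear_digraph_NDL (@mxdotBl F d n) (@mxdotDr F d n)) => //.
  by rewrite mulr_ge0 ?ler0n ?exprn_ge0 ?sqrtC_ge0.
rewrite exprMn -exprM [(_ * 2)%N]mulnC exprM sqrtCK.
rewrite -natrM -mulrnA -!natrX -natrM ler_nat.
exact: card_mxtuple_degenerate_le.
Qed.
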